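(* Let $\mathcal A$ be a transitive Lie algebroid with kernel $\mathcal L$ and let $\mathring\omega\in\Omega^1(\mathcal A,\mathcal L)$ be a background connection, i.e. a 1-form with $\mathring\omega\circ\iota=-\mathrm{Id}_{\mathcal L}$. For every (generalized) connection $\widehat\omega\in\Omega^1(\mathcal A,\mathcal L)$ with reduced kernel endomorphism $\tau=\widehat\omega\circ\iota+\mathrm{Id}_{\mathcal L}$, the 1-form $$\omega=\widehat\omega+\tau\circ\mathring\omega$$ is the connection 1-form of an ordinary connection on $\mathcal A$. Moreover, when $\widehat\omega$ undergoes the infinitesimal gauge transformation by $\xi\in\mathcal L$ (with $\mathring\omega$ fixed), the induced transformation of $\omega$ is the infinitesimal gauge transformation of ordinary connections, $\omega\mapsto\omega+\hat d\xi+[\omega,\xi]$ (to first order in $\xi$).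
   Context: A transitive Lie algebroid over $M$: finitely generated projective $C^\infty(M)$-module $\mathcal A$ with Lie bracket and surjective $C^\infty(M)$-linear Lie morphism $\rho:\mathcal A\to\Gamma(TM)$, $[X,fY]=f[X,Y]+(\rho(X)f)Y$; kernel $\mathcal L=\ker\rho$ (sections of a Lie algebra bundle), inclusion $\iota$. $\Omega^1(\mathcal A,\mathcal L)$: $C^\infty(M)$-linear maps $\mathcal A\to\mathcal L$; for $\xi\in\mathcal L$, $(\hat d\xi)(X)=[X,\iota\xi]$ viewed in $\mathcal L$. A (generalized) connection is any $\widehat\omega\in\Omega^1(\mathcal A,\mathcal L)$, with infinitesimal gauge transformation $\widehat\omega^\xi=\widehat\omega+\hat d\xi+[\widehat\omega,\xi]$ ($[\widehat\omega,\xi](X)=[\widehat\omega(X),\xi]$), and the induced transformation of $\tau$ is $\tau\mapsto\tau+[\tau,\xi]$. An ordinary connection is a $C^\infty(M)$-linear splitting $\nabla:\Gamma(TM)\to\mathcal A$ of $\rho$; its 1-form $\omega$ is defined by $X=\nabla_{\rho(X)}-\iota\omega(X)$, and these 1-forms are exactly those with $\omega\circ\iota=-\mathrm{Id}_{\mathcal L}$. *)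

(* Abstract (Lie--Rinehart) rendering of a transitive Lie
   algebroid: C^oo(M) is an abstract commutative ring R, Gamma(TM) an
   R-module V with Lie bracket and action by derivations on R. *)
From HB Require Import structures.
From mathcomp Require Import all_boot all_order all_algebra.
Set Implicit Arguments. Unset Strict Implicit. Unset Printing Implicit Defensive.
Import GRing.Theory.
Local Open Scope ring_scope.

(* Lie bracket: biadditive (left additivity + alternating), alternating, Jacobi *)
Definition is_lie_bracket (T : zmodType) (b : T -> T -> T) : Prop :=
  [/\ forall x y z, b (x + y) z = b x z + b y z,
      forall x, b x x = 0 &
      forall x y z, b x (b y z) + b y (b z x) + b z (b x y) = 0].

Definition Rlinear (R : comPzRingType) (U W : lmodType R) (f : U -> W) : Prop :=
  forall (a : R) (x y : U), f (a *: x + y) = a *: f x + f y.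

Definition fg_projective (R : comPzRingType) (A : lmodType R) : Prop :=
  exists (n : nat) (p : A -> 'rV[R]_n) (s : 'rV[R]_n -> A),
    [/\ Rlinear p, Rlinear s & forall x, s (p x) = x].

(* The vector fields: V = Gamma(TM) with bracket bV, acting on R = C^oo(M)
   by derivations via act (act v f = v(f)). *)
Definition vector_fields (R : comPzRingType) (V : lmodType R)
    (bV : V -> V -> V) (act : V -> R -> R) : Prop :=
  is_lie_bracket bV /\
  (forall (a : R) (v w : V) (f : R), act (a *: v + w) f = a * act v f + act w f) /\
  (forall v f g, act v (f + g) = act v f + act v g) /\
  (forall v f g, act v (f * g) = f * act v g + act v f * g) /\
  (forall v w f, act (bV v w) f = act v (act w f) - act w (act v f)) /\
  (forall v w (f : R), bV v (f *: w) = f *: bV v w + act v f *: w).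

Definition transitive_lie_algebroid (R : comPzRingType) (V : lmodType R)
    (bV : V -> V -> V) (act : V -> R -> R)
    (A : lmodType R) (bA : A -> A -> A) (rho : A -> V) : Prop :=
  fg_projective A /\
  is_lie_bracket bA /\
  Rlinear rho /\
  (forall v, exists X, rho X = v) /\
  (forall X Y, rho (bA X Y) = bV (rho X) (rho Y)) /\
  (forall X Y (f : R), bA X (f *: Y) = f *: bA X Y + act (rho X) f *: Y).

(* The kernel L = ker rho is represented as the elements of A killed by rho;
   the inclusion iota is the identity on those elements.  An element of
   Omega^1(A, L) is an R-linear map A -> A with values in ker rho. *)
Definition form1 (R : comPzRingType) (V A : lmodType R) (rho : A -> V)
    (w : A -> A) : Prop :=
  Rlinear w /\ forall X, rho (w X) = 0.

(* reduced kernel endomorphism tau = w o iota + Id_L  (meaningful on L) *)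
Definition red_tau (A : zmodType) (w : A -> A) : A -> A := fun l => w l + l.

Definition omega_of (A : zmodType) (w0 w : A -> A) : A -> A :=
  fun X => w X + red_tau w (w0 X).

(* infinitesimal gauge transformation: w^xi = w + d^xi + [w, xi],
   with (d^xi)(X) = [X, iota xi] and [w,xi](X) = [w X, xi] (bracket of L =
   restriction of the bracket of A). *)
Definition gauge (A : zmodType) (bA : A -> A -> A) (w : A -> A) (xi : A)
  : A -> A := fun X => w X + bA X xi + bA (w X) xi.

Definition ordinary_connection_form (R : comPzRingType) (V A : lmodType R)
    (rho : A -> V) (w : A -> A) : Prop :=
  exists nabla : V -> A,
    [/\ Rlinear nabla, forall v, rho (nabla v) = v &
        forall X, X = nabla (rho X) - w X].

Definition tau_gauge (A : zmodType) (bA : A -> A -> A) (tau : A -> A) (xi : A)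
  : A -> A := fun l => tau l + bA (tau l) xi.

Definition omega_transformed (A : zmodType) (bA : A -> A -> A)
    (w0 w : A -> A) (xi : A) : A -> A :=
  fun X => gauge bA w xi X + tau_gauge bA (red_tau w) xi (w0 X).

(* The form [omega = w + tau o w0] is R-linear with values in [ker rho],
   and on the kernel [w0] is [-Id], so [omega l = w l + w (- l) - l = - l].
   Any such form is the form of an ordinary connection: [X |-> X + omega X]
   vanishes on [ker rho], hence factors through the surjection [rho] as an
   R-linear splitting [nabla].  The gauge law holds exactly, not only to first
   order in [xi]: it is an identity in the abelian group [A] that needs only
   additivity of the bracket in its first argument. *)
From HB Require Import structures.
From mathcomp Require Import all_boot all_order all_algebra.
From Stdlib Require Import IndefiniteDescription.
Import GRing.Theory.
Local Open Scope ring_scope.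

Section RlinearTheory.
Variables (R : comPzRingType) (U W : lmodType R).

Section OneMap.
Variable f : U -> W.
Hypothesis f_lin : Rlinear f.

Lemma Rlinear0 : f 0 = 0.
Proof.
have := f_lin 1 0 0; rewrite !scale1r addr0 => f0.
by apply: (addrI (f 0)); rewrite addr0 -{1}f0.
Qed.

Lemma RlinearD x y : f (x + y) = f x + f y.
Proof. by have := f_lin 1 x y; rewrite !scale1r. Qed.

Lemma RlinearN x : f (- x) = - f x.
Proof. by apply: (addrI (f x)); rewrite -RlinearD !subrr Rlinear0. Qed.

Lemma RlinearB x y : f (x - y) = f x - f y.
Proof. by rewrite RlinearD RlinearN. Qed.

End OneMap.

Lemma Rlinear_add (f g : U -> W) : Rlinear f -> Rlinear g -> Rlinear (f \+ g).
Proof. by move=> f_lin g_lin a x y /=; rewrite f_lin g_lin scalerDr addrACA. Qed.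

Lemma Rlinear_comp (g : W -> W) (f : U -> W) :
  Rlinear f -> Rlinear g -> Rlinear (g \o f).
Proof. by move=> f_lin g_lin a x y /=; rewrite f_lin g_lin. Qed.

End RlinearTheory.

Arguments Rlinear0 {R U W f}.
Arguments RlinearD {R U W f}.
Arguments RlinearN {R U W f}.
Arguments RlinearB {R U W f}.

Section ConnectionForms.
Variables (R : comPzRingType) (V A : lmodType R) (rho : A -> V).
Hypotheses (rho_lin : Rlinear rho) (rho_surj : forall v, exists X, rho X = v).

Lemma form1_omega_of (w0 w : A -> A) :
  form1 rho w0 -> form1 rho w -> form1 rho (omega_of w0 w).
Proof.
move=> [w0_lin w0_ker] [w_lin w_ker]; split.
  apply: Rlinear_add => //; apply: Rlinear_add => //; exact: Rlinear_comp.
by move=> X; rewrite /omega_of /red_tau !(RlinearD rho_lin) w_ker w_ker w0_ker !addr0.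
Qed.

Lemma omega_of_kernel (w0 w : A -> A) :
  (forall l, rho l = 0 -> w0 l = - l) -> Rlinear w ->
  forall l, rho l = 0 -> omega_of w0 w l = - l.
Proof.
move=> w0_kernel w_lin l /w0_kernel w0l.
by rewrite /omega_of /red_tau w0l (RlinearN w_lin) addrA subrr add0r.
Qed.

Variable om : A -> A.
Hypotheses (om_form : form1 rho om) (om_kernel : forall l, rho l = 0 -> om l = - l).

Lemma add_form_factors X Y : rho X = rho Y -> X + om X = Y + om Y.
Proof.
move=> eq_rho; have ker_XY : rho (X - Y) = 0 by rewrite (RlinearB rho_lin) eq_rho subrr.
have := om_kernel _ ker_XY; rewrite (RlinearB om_form.1) => /eqP.
by rewrite subr_eq opprB => /eqP ->; rewrite addrA [X + _]addrC subrK.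
Qed.

Lemma form1_ordinary_connection : ordinary_connection_form rho om.
Proof.
have [om_lin om_ker] := om_form.
pose lift v := proj1_sig (constructive_indefinite_description _ (rho_surj v)).
have liftK v : rho (lift v) = v :=
  proj2_sig (constructive_indefinite_description _ (rho_surj v)).
exists (fun v => lift v + om (lift v)); split.
- move=> a v v'; rewrite -(add_form_factors (a *: lift v + lift v')).
    by rewrite om_lin scalerDr addrACA.
  by rewrite rho_lin !liftK.
- by move=> v; rewrite (RlinearD rho_lin) om_ker addr0 liftK.
- by move=> X; rewrite -(add_form_factors X) ?addrK ?liftK.
Qed.

End ConnectionForms.

Lemma omega_transformed_gauge (A : zmodType) (bA : A -> A -> A)
    (bA_addl : forall x y z, bA (x + y) z = bA x z + bA y z)
    (w0 w : A -> A) (xi X : A) :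
  omega_transformed bA w0 w xi X = gauge bA (omega_of w0 w) xi X.
Proof.
rewrite /omega_transformed /gauge /tau_gauge /omega_of (bA_addl (w X)).
by rewrite addrACA [in RHS](addrAC (w X)).
Qed.

Theorem theorem3p4 (R : comPzRingType) (V : lmodType R)
    (bV : V -> V -> V) (act : V -> R -> R)
    (A : lmodType R) (bA : A -> A -> A) (rho : A -> V)
    (HV : vector_fields bV act)
    (HA : transitive_lie_algebroid bV act bA rho)
    (w0 : A -> A) (Hw0 : form1 rho w0)
    (Hw0L : forall l, rho l = 0 -> w0 l = - l)
    (w : A -> A) (Hw : form1 rho w) :
  ordinary_connection_form rho (omega_of w0 w) /\
  (forall xi : A, rho xi = 0 ->
     forall X : A,
       omega_transformed bA w0 w xi X = gauge bA (omega_of w0 w) xi X).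
Proof.
have [_ [[bA_addl _ _] [rho_lin [rho_surj _]]]] := HA.
split; last by move=> xi _ X; apply: omega_transformed_gauge.
apply: form1_ordinary_connection => //; first exact: form1_omega_of.
exact: omega_of_kernel Hw.1.
Qed.
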